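(* The set $T^1(\Sigma)$ of isomorphism types of pruned $\Sigma$-trees is generated as a $(2,1,1,0)$-algebra (under pruned multiplication, $+$, $*$ and the trivial tree as identity constant) by the set $\Sigma$ of base trees.
   Context: Let $\Sigma$ be a set. A $\Sigma$-tree is a finite directed graph whose underlying undirected graph is a tree, edges labelled by elements of $\Sigma$, with distinguished start and end vertices such that there is a (possibly empty) directed path from start to end vertex. The trivial tree has a single vertex. A base tree has exactly one edge, its start vertex being the initial vertex of the edge and its end vertex the terminal vertex; the base tree labelled $a$ is identified with $a\in\Sigma$. A morphism $X\to Y$ maps vertices to vertices and edges to edges, preserving initial vertex, terminal vertex and label of each edge, and mapping start/end vertex to start/end vertex; isomorphisms are morphisms bijective on vertices and edges. A retraction is an idempotent morphism $X\to X$, its image a retract; $X$ is pruned if it admits no non-identity retraction. Every tree $X$ has a pruned retract, unique up to isomorphism, with isomorphism type $\overline{X}$. Unpruned operations: $X\times Y$ identifies the end vertex of (a copy of) $X$ with the start vertex of (a disjoint copy of) $Y$, start vertex that of $X$, end vertex that of $Y$; $X^{(+)}$ is $X$ with end vertex moved to the start vertex; $X^{( * )}$ is $X$ with start vertex moved to the end vertex. Pruned operations: $XY=\overline{X\times Y}$, $X^+=\overline{X^{(+)}}$, $X^*=\overline{X^{( * )}}$. *)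

From mathcomp Require Import all_boot.
Set Implicit Arguments. Unset Strict Implicit. Unset Printing Implicit Defensive.

(* A Sigma-labelled finite directed (multi)graph with distinguished start and
   end vertices. *)
Record stree (Sigma : Type) := STree {
  sV : finType;
  sE : finType;
  ssrc : sE -> sV;
  stgt : sE -> sV;
  slab : sE -> Sigma;
  sst : sV;
  sen : sV }.
Arguments STree {Sigma} sV sE ssrc stgt slab sst sen.
Arguments sV {Sigma}. Arguments sE {Sigma}.
Arguments ssrc {Sigma s}. Arguments stgt {Sigma s}. Arguments slab {Sigma s}.
Arguments sst {Sigma}. Arguments sen {Sigma}.

Section Trees.
Variable Sigma : Type.
Implicit Types X Y Z W : stree Sigma.

Definition uadj X : rel (sV X) := fun u v =>
  [exists e, ((ssrc e == u) && (stgt e == v)) || ((ssrc e == v) && (stgt e == u))].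
Definition dadj X : rel (sV X) := fun u v => [exists e, (ssrc e == u) && (stgt e == v)].

(* The underlying undirected (multi)graph is a tree: connected, and
   #edges = #vertices - 1 (equivalently: connected and acyclic); moreover
   there is a (possibly empty) directed path from start to end vertex. *)
Definition is_tree X : Prop :=
  [/\ (forall u v : sV X, connect (@uadj X) u v),
      #|sE X| + 1 = #|sV X|
    & connect (@dadj X) (sst X) (sen X)].

Definition is_morph X Y (fV : sV X -> sV Y) (fE : sE X -> sE Y) : Prop :=
  [/\ (forall e, ssrc (fE e) = fV (ssrc e)),
      (forall e, stgt (fE e) = fV (stgt e)),
      (forall e, slab (fE e) = slab e),
      fV (sst X) = sst Y
    & fV (sen X) = sen Y].

Definition iso X Y : Prop :=
  exists (fV : sV X -> sV Y) (fE : sE X -> sE Y),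
    [/\ is_morph fV fE, bijective fV & bijective fE].

Record retraction X := Retraction {
  rV : sV X -> sV X;
  rE : sE X -> sE X;
  r_morph : is_morph rV rE;
  rV_idem : forall v, rV (rV v) = rV v;
  rE_idem : forall e, rE (rE e) = rE e }.

Definition pruned X : Prop :=
  forall r : retraction X, (forall v, rV r v = v) /\ (forall e, rE r e = e).

Section Image.
Variables (X : stree Sigma) (r : retraction X).
Definition imV : finType := {v : sV X | rV r v == v}.
Definition imE : finType := {e : sE X | rE r e == e}.

Lemma im_src_proof (e : imE) : rV r (ssrc (val e)) == ssrc (val e).
Proof.
case: e => e /= /eqP He; case: (r_morph r) => Hs _ _ _ _.
by rewrite -Hs He.
Qed.
Lemma im_tgt_proof (e : imE) : rV r (stgt (val e)) == stgt (val e).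
Proof.
case: e => e /= /eqP He; case: (r_morph r) => _ Ht _ _ _.
by rewrite -Ht He.
Qed.
Lemma im_st_proof : rV r (sst X) == sst X.
Proof. by case: (r_morph r) => _ _ _ -> _. Qed.
Lemma im_en_proof : rV r (sen X) == sen X.
Proof. by case: (r_morph r) => _ _ _ _ ->. Qed.

Definition retract_tree : stree Sigma :=
  STree imV imE
    (fun e => exist _ (ssrc (val e)) (im_src_proof e))
    (fun e => exist _ (stgt (val e)) (im_tgt_proof e))
    (fun e => slab (val e))
    (exist _ (sst X) im_st_proof)
    (exist _ (sen X) im_en_proof).
End Image.

(* X is (isomorphic to) a pruned retract of W, i.e. the isomorphism type
   of X is \overline{W} *)
Definition pruned_retract_of X W : Prop :=
  pruned X /\ exists r : retraction W, iso X (retract_tree r).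

Definition base_tree (a : Sigma) : stree Sigma :=
  STree (bool : finType) (unit : finType) (fun _ => false) (fun _ => true)
    (fun _ => a) false true.

Definition trivial_tree : stree Sigma :=
  STree (unit : finType) (void : finType) (fun e => match e with end)
    (fun e => match e with end) (fun e => match e with end) tt tt.

(* unpruned product X x Y: glue end vertex of X to start vertex of Y *)
Section Prod.
Variables X Y : stree Sigma.
Definition prodV : finType := (sV X + {y : sV Y | y != sst Y})%type.
Definition injY (y : sV Y) : prodV :=
  match insub y with Some y' => inr y' | None => inl (sen X) end.
Definition prod_tree : stree Sigma :=
  STree prodV ((sE X + sE Y)%type : finType)
    (fun e => match e with inl e => inl (ssrc e) | inr e => injY (ssrc e) end)
    (fun e => match e with inl e => inl (stgt e) | inr e => injY (stgt e) end)
    (fun e => match e with inl e => slab e | inr e => slab e end)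
    (inl (sst X)) (injY (sen Y)).
End Prod.

Definition plus_tree X : stree Sigma :=
  STree (sV X) (sE X) ssrc stgt slab (sst X) (sst X).
Definition star_tree X : stree Sigma :=
  STree (sV X) (sE X) ssrc stgt slab (sen X) (sen X).

(* Closed under isomorphism, since elements are iso types. *)
Inductive generated : stree Sigma -> Prop :=
| gen_base (a : Sigma) X : iso X (base_tree a) -> generated X
| gen_one X : iso X trivial_tree -> generated X
| gen_mul Y Z X : generated Y -> generated Z ->
    pruned_retract_of X (prod_tree Y Z) -> generated X
| gen_plus Y X : generated Y -> pruned_retract_of X (plus_tree Y) -> generated X
| gen_star Y X : generated Y -> pruned_retract_of X (star_tree Y) -> generated X.

End Trees.

From mathcomp Require Import all_boot zify.
Set Implicit Arguments. Unset Strict Implicit. Unset Printing Implicit Defensive.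

(* Induction on the weight 2 #|E| + [start == end].  If start and end coincide
   and e is an edge at the start vertex s, the tree is Y^+ or Y^* (according to
   the direction of e), where Y is the same tree with its end moved to the other
   endpoint of e.  Otherwise let e : s -> z be the first edge of the directed path
   from start to end; removing e splits the tree into the side A of s and the side
   B of z, which contains the end.  If A = {s} the tree is the product of the base
   tree e and B, otherwise it is the product of A (with start = end = s) and the
   subtree on s, e and B.  The factors are lighter trees, and they are pruned
   because a retraction of a factor extends by the identity to a retraction of the
   whole tree.  Being pruned, the tree is its own pruned retract, hence the pruned
   product (plus, star) of its factors. *)

Lemma connect_homo (T T' : finType) (R : rel T) (R' : rel T') (S : pred T)
    (h : T -> T') x y :
  (forall u v, R u v -> S u -> S v /\ R' (h u) (h v)) ->
  S x -> connect R x y -> connect R' (h x) (h y).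
Proof.
move=> HR + /connectP [p Hp ->]; elim: p x Hp => [|z p IH] x //= /andP [Rxz Hp] Sx.
have [Sz R'xz] := HR _ _ Rxz Sx.
exact: connect_trans (connect1 R'xz) (IH _ Hp Sz).
Qed.

Lemma connect_preserves (T : finType) (R : rel T) (S : pred T) x y :
  (forall u v, R u v -> S u -> S v) -> S x -> connect R x y -> S y.
Proof.
move=> HR + /connectP [p Hp ->]; elim: p x Hp => [|z p IH] x //= /andP [Rxz Hp] Sx.
exact: IH Hp (HR _ _ Rxz Sx).
Qed.

Lemma connect_first_step (T : finType) (R : rel T) x y : connect R x y -> x != y ->
  exists2 z, R x z & connect R z y.
Proof.
case/connectP => [[|z p]] /= Hp Ey; first by rewrite Ey eqxx.
by case/andP: Hp => Rxz Hp _; exists z => //; apply/connectP; exists p.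
Qed.

Section Forest.
Variables (Sigma : Type) (X : stree Sigma).
Implicit Types (Q : {set sE X}) (f : sE X) (u v x y : sV X).

Definition joins f u v := ((ssrc f == u) && (stgt f == v)) || ((ssrc f == v) && (stgt f == u)).

Definition uadj_on Q : rel (sV X) := fun u v => [exists f in Q, joins f u v].
Definition dadj_on Q : rel (sV X) := fun u v => [exists f in Q, (ssrc f == u) && (stgt f == v)].
Definition component Q x := [set y | connect (uadj_on Q) x y].
Definition inner_edges Q x := [set f in Q | ssrc f \in component Q x].

Lemma joins_sym f : symmetric (joins f).
Proof. by move=> u v; rewrite /joins orbC. Qed.

Lemma joins_src f : joins f (ssrc f) (stgt f).
Proof. by rewrite /joins !eqxx. Qed.

Lemma uadj_onP Q u v : reflect (exists2 f, f \in Q & joins f u v) (uadj_on Q u v).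
Proof. exact: (iffP exists_inP). Qed.

Lemma uadj_on_sym Q : symmetric (uadj_on Q).
Proof.
by move=> u v; apply/uadj_onP/uadj_onP => -[f fQ J]; exists f; rewrite // joins_sym.
Qed.

Lemma connect_uadj_on_sym Q : connect_sym (uadj_on Q).
Proof. exact/sym_connect_sym/uadj_on_sym. Qed.

Lemma uadjE : @uadj _ X =2 uadj_on setT.
Proof. by move=> u v; apply/existsP/exists_inP => -[f]; exists f. Qed.

Lemma connect_uadj_on_sub Q Q' : {subset Q <= Q'} ->
  subrel (connect (uadj_on Q)) (connect (uadj_on Q')).
Proof.
move=> sQ; apply: connect_sub => u v /uadj_onP [f /sQ fQ' J].
by apply/connect1/uadj_onP; exists f.
Qed.

Lemma connect_dadj_on_sub Q Q' : {subset Q <= Q'} ->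
  subrel (connect (dadj_on Q)) (connect (dadj_on Q')).
Proof.
move=> sQ; apply: connect_sub => u v /exists_inP [f /sQ fQ' J].
by apply/connect1/exists_inP; exists f.
Qed.

Lemma component_id Q x : x \in component Q x.
Proof. by rewrite inE connect0. Qed.

Lemma component_closed Q x u v : u \in component Q x -> uadj_on Q u v -> v \in component Q x.
Proof. by rewrite !inE => xu uv; apply: connect_trans xu (connect1 uv). Qed.

Lemma component_trans Q x y : y \in component Q x -> component Q y \subset component Q x.
Proof. by rewrite inE => xy; apply/subsetP => z; rewrite !inE; apply: connect_trans. Qed.

Lemma component_sym Q x y : (y \in component Q x) = (x \in component Q y).
Proof. by rewrite !inE connect_uadj_on_sym. Qed.

Lemma in_inner_edges Q x f :
  (f \in inner_edges Q x) = (f \in Q) && (ssrc f \in component Q x).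
Proof. by rewrite [LHS]inE. Qed.

Lemma inner_edges_ends Q x f : f \in inner_edges Q x ->
  [/\ f \in Q, ssrc f \in component Q x & stgt f \in component Q x].
Proof.
rewrite inE => /andP [fQ sC]; split => //; apply: component_closed sC _.
by apply/uadj_onP; exists f; rewrite // joins_src.
Qed.

Lemma component_edgeless Q x : inner_edges Q x = set0 -> component Q x = [set x].
Proof.
move=> noE; apply/setP => y; rewrite inE; apply/idP/eqP => [xy|->]; last exact: component_id.
apply/eqP; apply: contraT; rewrite eq_sym => nxy; rewrite inE in xy.
have [z xz _] := connect_first_step xy nxy.
have zC : z \in component Q x by apply: component_closed xz; apply: component_id.
case/uadj_onP: xz => f fQ J.
suff : f \in inner_edges Q x by rewrite noE inE.
by rewrite inE fQ; case/orP: J => /andP [/eqP -> _]; rewrite ?component_id.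
Qed.

Lemma component_sub Q Q' y : {subset Q <= Q'} -> component Q y \subset component Q' y.
Proof. by move=> sQ; apply/subsetP => z; rewrite !inE; apply: connect_uadj_on_sub. Qed.

Lemma component_cut Q x f : f \in inner_edges Q x ->
  component Q x \subset component (Q :\ f) (ssrc f) :|: component (Q :\ f) (stgt f).
Proof.
case/inner_edges_ends => fQ aC _; apply/subsetP => y yC.
have : connect (uadj_on Q) (ssrc f) y.
  by rewrite -inE; apply: subsetP yC; rewrite component_sym in aC; apply: component_trans.
apply: (connect_preserves
  (S := [in component (Q :\ f) (ssrc f) :|: component (Q :\ f) (stgt f)]));
  last by rewrite inE component_id.
move=> u v /uadj_onP [g gQ J]; have [gf|gf] := eqVneq g f; first subst g.
  by case/orP: J => /andP [/eqP <- /eqP <-] _; rewrite !inE connect0 ?orbT.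
have uv : uadj_on (Q :\ f) u v by apply/uadj_onP; exists g; rewrite // !inE gf.
by rewrite !in_setU => /orP [] ?; apply/orP; [left|right]; apply: component_closed uv.
Qed.

Lemma component_disjoint Q x y :
  y \notin component Q x -> component Q x :&: component Q y = set0.
Proof.
move=> yCx; apply/setP => v; rewrite !inE; apply/negbTE; apply: contra yCx => /andP [xv yv].
by rewrite inE (connect_trans xv) // connect_uadj_on_sym.
Qed.

Lemma card_component Q x : #|component Q x| <= #|inner_edges Q x| + 1.
Proof.
have [n] := ubnP #|Q|; elim: n Q x => // n IH Q x ltQn.
have [noE|[f fI]] := set_0Vmem (inner_edges Q x).
  by rewrite component_edgeless // cards1 noE cards0.
have [fQ aC bC] := inner_edges_ends fI.
set Q' := Q :\ f; set a := ssrc f; set b := stgt f.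
have {}IH y : #|component Q' y| <= #|inner_edges Q' y| + 1.
  by apply: IH; move: ltQn (cardsD1 f Q); rewrite fQ -/Q'; lia.
have subI y : y \in component Q x -> inner_edges Q' y \subset inner_edges Q x :\ f.
  move=> yC; apply/subsetP => g /inner_edges_ends [/setD1P [gf gQ] gC _].
  rewrite in_setD1 gf inE gQ /=; apply: subsetP gC.
  by apply: subset_trans (component_trans yC); apply: component_sub => h /setD1P [].
have cardI := cardsD1 f (inner_edges Q x); rewrite fI in cardI.
have leC := subset_leq_card (component_cut fI); rewrite -/Q' -/a -/b in leC.
have [bCa|bCa] := boolP (b \in component Q' a).
  have IA := subset_leq_card (subI a aC).
  have CU : component Q' a :|: component Q' b = component Q' a.
    by apply/setUidPl; apply: component_trans.
  by move: leC; rewrite CU; have := IH a; lia.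
have disjC := component_disjoint bCa.
have disjI : inner_edges Q' a :&: inner_edges Q' b = set0.
  apply/setP => g; rewrite !inE; apply/negbTE/negP => /andP [/andP [_ ga] /andP [_ gb]].
  by move/setP: disjC => /(_ (ssrc g)); rewrite !inE ga gb.
have IU : inner_edges Q' a :|: inner_edges Q' b \subset inner_edges Q x :\ f.
  by rewrite subUset !subI.
move: leC (subset_leq_card IU) (cardsUI (component Q' a) (component Q' b)).
move: (cardsUI (inner_edges Q' a) (inner_edges Q' b)); rewrite disjC disjI !cards0.
have := IH a; have := IH b; lia.
Qed.

Lemma joins_ends f u v u' v' : joins f u v -> joins f u' v' ->
  ((u' == u) && (v' == v)) || ((u' == v) && (v' == u)).
Proof.
by rewrite /joins => /orP [] /andP [/eqP <- /eqP <-] /orP [] /andP [/eqP <- /eqP <-];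
  rewrite !eqxx ?orbT.
Qed.

Lemma connect_dadj_on_uadj_on Q : subrel (connect (dadj_on Q)) (connect (uadj_on Q)).
Proof.
apply: connect_sub => u v /exists_inP [f fQ J].
by apply/connect1/exists_inP; exists f; rewrite // /joins J.
Qed.

Lemma component_inner_connect Q x v :
  v \in component Q x -> connect (uadj_on (inner_edges Q x)) x v.
Proof.
rewrite inE => /(connect_homo (S := [in component Q x]) (h := id)
  (R' := uadj_on (inner_edges Q x))); apply; last exact: component_id.
move=> u y uy uC; have yC := component_closed uC uy; split => //.
case/uadj_onP: uy => g gQ J; apply/uadj_onP; exists g => //.
by rewrite inE gQ; case/orP: J => /andP [/eqP -> _].
Qed.

End Forest.

Definition weight (Sigma : Type) (X : stree Sigma) := 2 * #|sE X| + (sst X == sen X).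

Section SubTree.
Variables (Sigma : Type) (X : stree Sigma) (P : {set sV X}) (Q : {set sE X}) (p q : sV X).
Hypothesis pP : p \in P.

Let p0 : {v | v \in P} := exist _ p pP.

Definition sub_tree : stree Sigma :=
  STree {v | v \in P} {f | f \in Q}
    (fun f => insubd p0 (ssrc (val f))) (fun f => insubd p0 (stgt (val f)))
    (fun f => slab (val f)) p0 (insubd p0 q).

Hypothesis QP : forall f, f \in Q -> (ssrc f \in P) && (stgt f \in P).
Hypothesis qP : q \in P.

Lemma sub_tree_src (f : sE sub_tree) : val (ssrc f) = ssrc (val f).
Proof. by case: f => f fQ /=; rewrite insubdK //; case/andP: (QP fQ). Qed.

Lemma sub_tree_tgt (f : sE sub_tree) : val (stgt f) = stgt (val f).
Proof. by case: f => f fQ /=; rewrite insubdK //; case/andP: (QP fQ). Qed.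

Lemma sub_tree_en : val (sen sub_tree) = q.
Proof. exact: insubdK. Qed.

Lemma card_sub_treeV : #|sV sub_tree| = #|P|.
Proof. by rewrite card_sig; apply: eq_card. Qed.

Lemma card_sub_treeE : #|sE sub_tree| = #|Q|.
Proof. by rewrite card_sig; apply: eq_card. Qed.

Lemma weight_sub_tree : weight sub_tree <= 2 * #|Q| + 1.
Proof. by rewrite /weight card_sub_treeE leq_add2l leq_b1. Qed.

Lemma sub_tree_is_tree r : r \in P -> (forall v, v \in P -> connect (uadj_on Q) r v) ->
  #|Q| + 1 = #|P| -> connect (dadj_on Q) p q -> is_tree sub_tree.
Proof.
move=> rP rconn cardQP pq; split; last first.
- have -> : sst sub_tree = insubd p0 p by apply: val_inj; rewrite /= insubdK.
  apply: (connect_homo (S := [in P])) pq => // x y /exists_inP [f fQ /andP [/eqP <- /eqP <-]] _.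
  case/andP: (QP fQ) => sP tP; split => //.
  by apply/existsP; exists (exist _ f fQ); rewrite /= !eqxx.
- by rewrite card_sub_treeE card_sub_treeV.
have root_conn (v : sV sub_tree) : connect (@uadj _ sub_tree) (insubd p0 r) v.
  rewrite -(valKd p0 v); apply: (connect_homo (S := [in P])) (rconn _ (valP v)) => //.
  move=> x y /uadj_onP [f fQ J] _; case/andP: (QP fQ) => sP tP.
  by case/orP: J => /andP [/eqP <- /eqP <-]; split => //; apply/existsP;
    exists (exist _ f fQ); rewrite /joins /= !eqxx ?orbT.
have sym : connect_sym (@uadj _ sub_tree).
  by apply: sym_connect_sym => u v; rewrite !uadjE uadj_on_sym.
by move=> u v; apply: connect_trans (root_conn v); rewrite sym.
Qed.

Hypothesis boundary : forall f, f \notin Q -> forall v, v \in P ->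
  (ssrc f == v) || (stgt f == v) -> (v == p) || (v == q).
Hypothesis stP : sst X \in P -> (sst X == p) || (sst X == q).
Hypothesis enP : sen X \in P -> (sen X == p) || (sen X == q).

(* A retraction of the subtree extends by the identity outside P; this is a
   morphism of X because P is attached to the rest of X only at p and q. *)
Lemma sub_tree_pruned : pruned X -> pruned sub_tree.
Proof.
move=> prX r.
pose fV (v : sV X) := if insub v is Some v1 then val (rV r v1) else v.
pose fE (f : sE X) := if insub f is Some f1 then val (rE r f1) else f.
have [rs rt rl rst ren] := r_morph r.
have fVval (w : sV sub_tree) : fV (val w) = val (rV r w) by rewrite /fV valK.
have fEval (g : sE sub_tree) : fE (val g) = val (rE r g) by rewrite /fE valK.
have fVP v : v \in P -> fV v = val (rV r (insubd p0 v)) by move=> vP; rewrite -fVval insubdK.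
have fV_out v : v \notin P -> fV v = v by move=> vP; rewrite /fV insubF //; apply/negbTE.
have fE_out f : f \notin Q -> fE f = f by move=> fQ; rewrite /fE insubF //; apply/negbTE.
have fV_fix v : (v \in P -> (v == p) || (v == q)) -> fV v = v.
  move=> Hv; have [vP|] := boolP (v \in P); last exact: fV_out.
  case/orP: (Hv vP) => /eqP ->; rewrite fVP //.
    have -> : insubd p0 p = p0 by apply: val_inj; rewrite insubdK.
    by rewrite rst.
  by rewrite ren sub_tree_en.
have fM : is_morph fV fE.
  split=> [f|f|f||]; [| | |exact: fV_fix _ stP|exact: fV_fix _ enP].
  - rewrite /fE; case: insubP => [f1 _ <-|fQ].
      by case/andP: (QP (valP f1)) => sP _; rewrite -(sub_tree_src (rE r f1)) rs fVP.
    by apply/esym/fV_fix => vP; apply: (boundary fQ vP); rewrite eqxx.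
  - rewrite /fE; case: insubP => [f1 _ <-|fQ].
      by case/andP: (QP (valP f1)) => _ tP; rewrite -(sub_tree_tgt (rE r f1)) rt fVP.
    by apply/esym/fV_fix => vP; apply: (boundary fQ vP); rewrite eqxx orbT.
  - by rewrite /fE; case: insubP => [f1 _ <-|] //; apply: rl.
have fV_idem v : fV (fV v) = fV v.
  have [vP|vP] := boolP (v \in P); last by rewrite !fV_out.
  by rewrite (fVP _ vP) fVval rV_idem.
have fE_idem f : fE (fE f) = fE f.
  have [fQ|fQ] := boolP (f \in Q); last by rewrite !fE_out.
  by rewrite -[f]/(val (exist _ f fQ : sE sub_tree)) !fEval rE_idem.
have [idV idE] := prX (Retraction fM fV_idem fE_idem).
by split=> [w|g]; apply: val_inj; [rewrite -fVval; apply: idV | rewrite -fEval; apply: idE].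
Qed.

End SubTree.

Section Isomorphism.
Variable Sigma : Type.
Implicit Types X Y Z W : stree Sigma.

Lemma iso_sym X Y : iso X Y -> iso Y X.
Proof.
case=> fV [fE [[fs ft fl fst fen] [gV fgV gfV] [gE fgE gfE]]].
exists gV, gE; split; [|by exists fV|by exists fE].
split=> [e|e|e||].
- by apply: (can_inj fgV); rewrite -fs !gfE gfV.
- by apply: (can_inj fgV); rewrite -ft !gfE gfV.
- by rewrite -[in RHS](gfE e) fl.
- by rewrite -fst fgV.
- by rewrite -fen fgV.
Qed.

Lemma iso_trans X Y Z : iso X Y -> iso Y Z -> iso X Z.
Proof.
case=> fV [fE [[fs ft fl fst fen] bfV bfE]] [gV [gE [[gs gt gl gst gen] bgV bgE]]].
exists (gV \o fV), (gE \o fE); split; try exact: bij_comp.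
by split=> [e|e|e||] /=; rewrite ?gs ?fs ?gt ?ft ?gl ?fl ?fst ?gst ?fen ?gen.
Qed.

Lemma inj_morph_iso X Y (fV : sV X -> sV Y) (fE : sE X -> sE Y) :
  is_morph fV fE -> injective fV -> injective fE ->
  #|sV Y| <= #|sV X| -> #|sE Y| <= #|sE X| -> iso X Y.
Proof. by move=> fM iV iE cV cE; exists fV, fE; split => //; apply: inj_card_bij. Qed.

Lemma is_morph_id X : is_morph (@id (sV X)) (@id (sE X)).
Proof. by []. Qed.

Definition id_retraction X : retraction X :=
  Retraction (is_morph_id X) (fun _ => erefl) (fun _ => erefl).

Lemma iso_retract_id X : iso X (retract_tree (id_retraction X)).
Proof.
apply: (@inj_morph_iso X (retract_tree (id_retraction X))
  (fun v => exist _ v (eqxx v)) (fun e => exist _ e (eqxx e))).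
- by split=> * //; apply: val_inj.
- by move=> u v /(congr1 val).
- by move=> u v /(congr1 val).
- exact: leq_card val_inj.
- exact: leq_card val_inj.
Qed.

Lemma pruned_retract_of_iso X W : pruned X -> iso X W -> pruned_retract_of X W.
Proof.
move=> prX XW; split=> //; exists (id_retraction W).
exact: iso_trans XW (iso_retract_id W).
Qed.

End Isomorphism.

Section Cut.
Variables (Sigma : Type) (X : stree Sigma) (P1 P2 : {set sV X}) (Q1 : {set sE X}) (c : sV X).
Hypotheses (stP1 : sst X \in P1) (enP2 : sen X \in P2) (cP1 : c \in P1) (cP2 : c \in P2).
Hypothesis cover : forall v, (v \in P1) || (v \in P2).
Hypothesis meet : forall v, v \in P1 -> v \in P2 -> v = c.
Hypothesis Q1P1 : forall f, f \in Q1 -> (ssrc f \in P1) && (stgt f \in P1).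
Hypothesis Q2P2 : forall f, f \in ~: Q1 -> (ssrc f \in P2) && (stgt f \in P2).

Definition cut_left := sub_tree Q1 c stP1.
Definition cut_right := sub_tree (~: Q1) (sen X) cP2.

Lemma iso_cut : iso X (prod_tree cut_left cut_right).
Proof.
apply: iso_sym.
pose gV (z : prodV cut_left cut_right) : sV X :=
  match z with inl v => val v | inr y => val (val y) end.
pose gE (z : sE (prod_tree cut_left cut_right)) : sE X :=
  match z with inl f => val f | inr f => val f end.
have gV_injY y : gV (injY cut_left y) = val y.
  rewrite /injY; case: insubP => [y' _ <-|] //=.
  by rewrite negbK => /eqP -> /=; rewrite insubdK.
have sep (u : sV cut_left) (y : {y : sV cut_right | y != sst cut_right}) :
    gV (inl u) <> gV (inr y).
  move=> /= uy; move/eqP: (valP y); apply; apply: val_inj; rewrite /= -uy.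
  by apply: meet (valP u) _; rewrite [X in X \in _]uy; apply: valP.
apply: (@inj_morph_iso _ (prod_tree cut_left cut_right) X gV gE).
- split=> [[f|f]|[f|f]|[f|f]||] //=; rewrite ?gV_injY ?sub_tree_src ?sub_tree_tgt //.
  by rewrite sub_tree_en.
- case=> [u|y] [u'|y'] //= uy.
  + by congr inl; apply: val_inj.
  + by case: (sep _ _ uy).
  + by case: (sep _ _ (esym uy)).
  + by congr inr; do 2 apply: val_inj.
- case=> [[f fQ]|[f fQ]] [[f' fQ']|[f' fQ']] /= ff'; subst f'.
  + by congr inl; apply: val_inj.
  + by exfalso; move: fQ'; rewrite inE fQ.
  + by exfalso; move: fQ; rewrite inE fQ'.
  + by congr inr; apply: val_inj.
- have cardY : #|{: {y : sV cut_right | y != sst cut_right}}| = #|P2|.-1.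
    by rewrite card_sig (eq_card (B := predC1 (sst cut_right))) // cardC1 card_sub_treeV.
  have U : P1 :|: P2 = setT by apply/setP => v; rewrite !inE cover.
  have I : P1 :&: P2 = [set c].
    apply/setP => v; rewrite !inE; apply/andP/eqP => [[]|->]; [exact: meet | by []].
  have := cardsUI P1 P2; rewrite U I cards1 cardsT.
  have : 0 < #|P2| by apply/card_gt0P; exists c.
  by rewrite card_sum card_sub_treeV cardY; lia.
- by rewrite card_sum !card_sub_treeE cardsC.
Qed.

Lemma cut_left_pruned : pruned X -> pruned cut_left.
Proof.
apply: (sub_tree_pruned Q1P1 cP1) => [f fQ v vP1||enP1].
- have /andP [sP2 tP2] : (ssrc f \in P2) && (stgt f \in P2) by apply: Q2P2; rewrite inE.
  by case/orP => /eqP Ev; subst v; rewrite (meet vP1) ?eqxx ?orbT.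
- by rewrite eqxx.
- by rewrite (meet enP1 enP2) eqxx orbT.
Qed.

Lemma cut_right_pruned : pruned X -> pruned cut_right.
Proof.
apply: (sub_tree_pruned Q2P2 enP2) => [f fQ v vP2|stP2|].
- have /andP [sP1 tP1] : (ssrc f \in P1) && (stgt f \in P1).
    by apply: Q1P1; rewrite inE negbK in fQ.
  by case/orP => /eqP Ev; subst v; rewrite (meet _ vP2) ?eqxx.
- by rewrite (meet stP1 stP2) eqxx.
- by rewrite eqxx orbT.
Qed.

Lemma cut_generated : pruned X -> generated cut_left -> generated cut_right -> generated X.
Proof. by move=> prX gL gR; apply: gen_mul gL gR (pruned_retract_of_iso prX iso_cut). Qed.

End Cut.

Section Sides.
Variables (Sigma : Type) (X : stree Sigma).
Hypothesis connX : forall u v : sV X, connect (@uadj _ X) u v.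
Hypothesis cardX : #|sE X| + 1 = #|sV X|.
Variables (e : sE X) (s w : sV X).
Hypothesis esw : joins e s w.

Local Notation A := (component [set~ e] s).
Local Notation B := (component [set~ e] w).
Local Notation EA := (inner_edges [set~ e] s).
Local Notation EB := (inner_edges [set~ e] w).

Lemma side_cover v : (v \in A) || (v \in B).
Proof.
apply: (connect_preserves (S := [pred v | (v \in A) || (v \in B)])) (connX s v);
  last by rewrite /= component_id.
move=> u y; rewrite uadjE => /uadj_onP [f _ J] /=.
have [fe|fe] := eqVneq f e.
  by subst f; case/orP: (joins_ends esw J) => /andP [_ /eqP ->]; rewrite component_id ?orbT.
have uy : uadj_on [set~ e] u y by apply/uadj_onP; exists f; rewrite ?in_setC1.
by case/orP => uC; apply/orP; [left|right]; apply: component_closed uy.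
Qed.

(* Otherwise A would contain all #|E| + 1 vertices while spanned by at most
   #|E| - 1 edges. *)
Lemma remove_edge_separates : w \notin A.
Proof.
apply/negP => wA.
have AT : A = setT.
  apply/setP => v; rewrite in_setT; case/orP: (side_cover v) => // vB.
  exact: subsetP (component_trans wA) v vB.
have := card_component [set~ e] s; rewrite AT cardsT -cardX.
have : #|EA| <= #|[set~ e]| by apply/subset_leq_card/subsetP => f /inner_edges_ends [].
have : 0 < #|sE X| by apply/card_gt0P; exists e.
by rewrite cardsC1; lia.
Qed.

Lemma joins_tree_neq : s != w.
Proof. by apply: contraNneq remove_edge_separates => <-; apply: component_id. Qed.

Lemma sides_disjoint v : v \in A -> v \notin B.
Proof.
move=> vA; apply: contraNN remove_edge_separates => vB.
by apply: subsetP (component_trans vA) _ _; rewrite component_sym.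
Qed.

Lemma side_edges_cover f : f != e -> (f \in EA) || (f \in EB).
Proof. by move=> fe; rewrite !in_inner_edges !in_setC1 fe side_cover. Qed.

Lemma side_edges_disjoint f : f \in EA -> f \notin EB.
Proof.
by case/inner_edges_ends => _ fA _; rewrite in_inner_edges (negPf (sides_disjoint fA)) andbF.
Qed.

Lemma card_sides :
  [/\ #|A| = #|EA| + 1, #|B| = #|EB| + 1 & #|sE X| = #|EA| + #|EB| + 1].
Proof.
have UV : A :|: B = setT by apply/setP => v; rewrite in_setU in_setT side_cover.
have IV : A :&: B = set0.
  apply/setP => v; rewrite in_setI in_set0.
  by case: (boolP (v \in A)) => // /sides_disjoint /negPf.
have UE : EA :|: EB = [set~ e].
  apply/setP => f; rewrite in_setU in_setC1.
  have [->|fe] := eqVneq f e; last by rewrite side_edges_cover.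
  by rewrite !in_inner_edges !in_setC1 eqxx.
have IE : EA :&: EB = set0.
  apply/setP => f; rewrite in_setI in_set0.
  by case: (boolP (f \in EA)) => // /side_edges_disjoint /negPf.
move: (cardsUI A B) (cardsUI EA EB) (cardsC1 e).
rewrite UV IV UE IE !cards0 cardsT -cardX.
have : 0 < #|sE X| by apply/card_gt0P; exists e.
have := card_component [set~ e] s; have := card_component [set~ e] w.
by split; lia.
Qed.

End Sides.

Section SmallTrees.
Variable Sigma : Type.
Implicit Types X Y : stree Sigma.

Lemma base_tree_iso Y (e : sE Y) : #|sE Y| = 1 -> #|sV Y| = 2 ->
  ssrc e = sst Y -> stgt e = sen Y -> sst Y != sen Y -> iso Y (base_tree (slab e)).
Proof.
move=> cardE cardV es et st_en; apply: iso_sym.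
apply: (@inj_morph_iso _ (base_tree (slab e)) Y
  (fun b : bool => if b then sen Y else sst Y) (fun _ => e)).
- by split.
- by case; case => //= /eqP; rewrite ?(negPf st_en) // eq_sym (negPf st_en).
- by case; case.
- by rewrite cardV card_bool.
- by rewrite cardE card_unit.
Qed.

Lemma trivial_tree_iso Y : #|sE Y| = 0 -> #|sV Y| = 1 -> iso Y (trivial_tree Sigma).
Proof.
move=> cardE cardV; apply: iso_sym.
apply: (@inj_morph_iso _ (trivial_tree Sigma) Y (fun _ => sst Y) (fun x => match x with end)).
- have /fintype_le1P all_eq : #|sV Y| <= 1 by rewrite cardV.
  by split=> [[]|[]|[]||] //; apply: all_eq.
- by case; case.
- by case.
- by rewrite cardV card_unit.
- by rewrite cardE.
Qed.

Definition reroot X (a b : sV X) : stree Sigma := STree (sV X) (sE X) ssrc stgt slab a b.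

Lemma iso_reroot X a b : sst X = a -> sen X = b -> iso X (reroot a b).
Proof.
by move=> <- <-; apply: (@inj_morph_iso _ _ (reroot (sst X) (sen X)) id id).
Qed.

Lemma reroot_pruned X a b : (sst X == a) || (sst X == b) -> (sen X == a) || (sen X == b) ->
  pruned X -> pruned (reroot a b).
Proof.
move=> stab enab prX r; have [rs rt rl rst ren] := r_morph r.
have fix_ab v : (v == a) || (v == b) -> rV r v = v by case/orP => /eqP ->.
have rM : @is_morph _ X X (rV r) (rE r) by split=> //; apply: fix_ab.
exact: (prX (Retraction rM (rV_idem r) (rE_idem r))).
Qed.

End SmallTrees.

Section InductionStep.
Variables (Sigma : Type) (X : stree Sigma).
Hypothesis connX : forall u v : sV X, connect (@uadj _ X) u v.
Hypothesis cardX : #|sE X| + 1 = #|sV X|.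
Hypothesis pathX : connect (@dadj _ X) (sst X) (sen X).
Hypothesis prX : pruned X.
Hypothesis IH : forall Y : stree Sigma,
  weight Y < weight X -> is_tree Y -> pruned Y -> generated Y.

Lemma generated_loop : sst X = sen X -> 0 < #|sE X| -> generated X.
Proof.
move=> st_en Epos.
have [v] : exists v, v \in [set~ sst X].
  by apply/card_gt0P; rewrite cardsC1 -cardX; lia.
rewrite in_setC1 eq_sym => st_v.
have [z /[!uadjE] /uadj_onP [e _ esz] _] := connect_first_step (connX _ v) st_v.
have st_z := joins_tree_neq connX cardX esz.
have weightX : weight X = 2 * #|sE X| + 1 by rewrite /weight st_en eqxx.
case/orP: (esz) => /andP [/eqP es /eqP ez].
- apply: (gen_plus (Y := reroot (sst X) z)).
    apply: IH; first by rewrite weightX /weight /= (negPf st_z); lia.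
      by split=> //=; apply/connect1/existsP; exists e; rewrite es ez !eqxx.
    by apply: reroot_pruned => //; rewrite -?st_en eqxx ?orbT.
  exact: pruned_retract_of_iso prX (iso_reroot _ _).
- apply: (gen_star (Y := reroot z (sst X))).
    apply: IH; first by rewrite weightX /weight /= eq_sym (negPf st_z); lia.
      by split=> //=; apply/connect1/existsP; exists e; rewrite es ez !eqxx.
    by apply: reroot_pruned => //; rewrite -?st_en eqxx ?orbT.
  exact: pruned_retract_of_iso prX (iso_reroot _ _).
Qed.

Section FirstEdge.
Hypothesis st_en : sst X != sen X.
Variables (e : sE X) (z : sV X).
Hypotheses (es : ssrc e = sst X) (ez : stgt e = z) (zen : connect (@dadj _ X) z (sen X)).

Local Notation A := (component [set~ e] (sst X)).
Local Notation B := (component [set~ e] z).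
Local Notation EA := (inner_edges [set~ e] (sst X)).
Local Notation EB := (inner_edges [set~ e] z).

Let esz : joins e (sst X) z. Proof. by rewrite /joins es ez !eqxx. Qed.
Let st_z : sst X != z. Proof. exact (joins_tree_neq connX cardX esz). Qed.
Let stB : sst X \notin B. Proof. exact (sides_disjoint connX cardX esz (component_id _ _)). Qed.
Let weightX : weight X = 2 * #|sE X|. Proof. by rewrite /weight (negPf st_en) addn0. Qed.
Let EB_Qe : {subset EB <= [set~ e]}. Proof. by move=> f /inner_edges_ends []. Qed.

Lemma side_path : connect (dadj_on EB) z (sen X).
Proof.
apply: (connect_homo (S := [in B]) (h := id)) zen; last exact: component_id.
move=> u v /existsP [f /andP [/eqP fu /eqP fv]] uB.
have fe : f != e by apply: contraNneq stB => fe; subst f; rewrite -es fu.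
have fEB : f \in EB by rewrite in_inner_edges in_setC1 fe fu.
split; last by apply/exists_inP; exists f; rewrite // fu fv !eqxx.
apply: component_closed uB _; apply/uadj_onP; exists f; first by rewrite in_setC1.
by rewrite /joins fu fv !eqxx.
Qed.

Lemma en_side : sen X \in B.
Proof. by rewrite inE; apply/(connect_uadj_on_sub EB_Qe)/connect_dadj_on_uadj_on/side_path. Qed.

(* The start vertex is a leaf: X is the product of the base tree e and the side B. *)
Lemma generated_split_pendant : EA = set0 -> generated X.
Proof.
move=> EA0; have A1 : A = [set sst X] := component_edgeless EA0.
have stP1 : sst X \in [set sst X; z] := set21 _ _.
have zP1 : z \in [set sst X; z] := set22 _ _.
have cover v : (v \in [set sst X; z]) || (v \in B).
  by case/orP: (side_cover connX esz v) => [|->]; rewrite ?orbT // A1 !inE => ->.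
have meet v : v \in [set sst X; z] -> v \in B -> v = z.
  by case/set2P => -> // stB'; case/negP: stB.
have Q1P1 f : f \in [set e] -> (ssrc f \in [set sst X; z]) && (stgt f \in [set sst X; z]).
  by move/set1P => ->; rewrite es ez stP1 zP1.
have Qe_EB f : f \in ~: [set e] -> f \in EB.
  by rewrite in_setC1 => /(side_edges_cover connX esz); rewrite EA0 inE.
have Q2P2 f : f \in ~: [set e] -> (ssrc f \in B) && (stgt f \in B).
  by move/Qe_EB/inner_edges_ends => [_ -> ->].
apply: (cut_generated (stP1 := stP1) (cP2 := component_id _ z)
  en_side zP1 cover meet Q1P1 Q2P2 prX).
  apply/gen_base/(base_tree_iso (Y := cut_left [set e] z stP1) (e := exist _ e (set11 e))).
  - by rewrite card_sub_treeE cards1.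
  - by rewrite card_sub_treeV cards2 st_z.
  - by apply: val_inj; rewrite (sub_tree_src Q1P1) /= es.
  - by apply: val_inj; rewrite (sub_tree_tgt Q1P1) sub_tree_en.
  - by apply: contra_neq st_z => /(congr1 val); rewrite sub_tree_en.
apply: IH.
- have : weight (cut_right [set e] (component_id [set~ e] z)) <= _ := weight_sub_tree _ _ _.
  have : 0 < #|sE X| by apply/card_gt0P; exists e.
  by rewrite weightX cardsC1; lia.
- apply: (sub_tree_is_tree _ Q2P2 (component_id [set~ e] z)) => [v||]; first by rewrite inE.
    by rewrite cardsC1; have [_ -> ->] := card_sides connX cardX esz; rewrite EA0 cards0; lia.
  by apply: connect_dadj_on_sub side_path.
- exact: (cut_right_pruned stP1 en_side meet Q1P1 Q2P2 prX).
Qed.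

(* X is the product of the side A (a loop at the start vertex) and the subtree
   spanned by the start vertex, e and B. *)
Lemma generated_split_inner : EA != set0 -> generated X.
Proof.
move=> EA_n0; have EA_pos : 0 < #|EA| by rewrite card_gt0.
have [_ cardB cardE] := card_sides connX cardX esz.
have stP1 : sst X \in A := component_id _ _.
have stP2 : sst X \in sst X |: B := setU11 _ _.
have enP2 : sen X \in sst X |: B by rewrite in_setU1 en_side orbT.
have cover v : (v \in A) || (v \in sst X |: B) by rewrite in_setU1 orbCA side_cover ?orbT.
have meet v : v \in A -> v \in sst X |: B -> v = sst X.
  by move=> vA /setU1P [] // vB; case/negP: (sides_disjoint connX cardX esz vA).
have Q1P1 f : f \in EA -> (ssrc f \in A) && (stgt f \in A).
  by case/inner_edges_ends => _ -> ->.
have EB_EA : {subset EB <= ~: EA}.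
  by move=> f fB; rewrite in_setC; apply: contraL fB; apply: side_edges_disjoint.
have Q2P2 f : f \in ~: EA -> (ssrc f \in sst X |: B) && (stgt f \in sst X |: B).
  move=> fA; have [->|fe] := eqVneq f e.
    by rewrite es ez !in_setU1 eqxx component_id !orbT.
  case/orP: (side_edges_cover connX esz fe) => [fA'|/inner_edges_ends [_ sB tB]].
    by rewrite in_setC fA' in fA.
  by rewrite !in_setU1 sB tB !orbT.
apply: (cut_generated (stP1 := stP1) (cP2 := stP2) enP2 stP1 cover meet Q1P1 Q2P2 prX);
  apply: IH.
- have : weight (cut_left EA (sst X) stP1) <= _ := weight_sub_tree _ _ _.
  by rewrite weightX cardE; lia.
- apply: (sub_tree_is_tree _ Q1P1 stP1) => [v||]; first exact: component_inner_connect.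
    by have [-> _ _] := card_sides connX cardX esz.
  exact: connect0.
- exact: (cut_left_pruned enP2 stP1 meet Q1P1 Q2P2 prX).
- have : weight (cut_right EA stP2) <= _ := weight_sub_tree _ _ _.
  by move: (cardsC EA); rewrite weightX cardE; lia.
- have stz : dadj_on (~: EA) (sst X) z.
    apply/exists_inP; exists e; last by rewrite es ez !eqxx.
    by rewrite in_setC in_inner_edges in_setC1 eqxx.
  apply: (sub_tree_is_tree _ Q2P2 stP2) => [v||].
  + case/setU1P => [->|vB]; first exact: connect0.
    apply: connect_trans (connect_dadj_on_uadj_on (connect1 stz)) _.
    exact: connect_uadj_on_sub EB_EA _ _ (component_inner_connect vB).
  + by move: (cardsC EA); rewrite cardsU1 (negPf stB) cardB cardE; lia.
  + exact: connect_trans (connect1 stz) (connect_dadj_on_sub EB_EA side_path).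
- exact: (cut_right_pruned stP1 enP2 meet Q1P1 Q2P2 prX).
Qed.

End FirstEdge.

Lemma generated_split : sst X != sen X -> generated X.
Proof.
move=> st_en; have [z /existsP [e /andP [/eqP es /eqP ez]] zen] := connect_first_step pathX st_en.
have [EA0|EA_n0] := eqVneq (inner_edges [set~ e] (sst X)) set0.
  exact (generated_split_pendant st_en es ez zen EA0).
exact (generated_split_inner st_en es ez zen EA_n0).
Qed.

End InductionStep.

Theorem proposition5p1 (Sigma : Type) (X : stree Sigma) :
  is_tree X -> pruned X -> generated X.
Proof.
have [n] := ubnP (weight X); elim: n X => // n IH X ltXn [connX cardX pathX] prX.
have {}IH (Y : stree Sigma) : weight Y < weight X -> is_tree Y -> pruned Y -> generated Y.
  by move=> ltYX; apply: IH; lia.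
have [E0|Epos] := posnP #|sE X|.
  by apply/gen_one/trivial_tree_iso => //; rewrite -cardX E0.
have [st_en|st_en] := eqVneq (sst X) (sen X).
  exact: generated_loop.
exact: generated_split.
Qed.
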